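(* Let $\mathcal G$ be a core network with input nodes $\iota_1,\dots,\iota_n$ and output node $o$, let $\rho_k>\rho_{k+1}$ be adjacent absolutely super-simple nodes, and let $\mathcal B_i$ be an $\mathcal A_{\mathcal G}$-path component. Suppose there is $m$ and an $\iota_mo$-simple path $S_m$ such that nodes in $\mathcal B_i$ are $CS_m$-path equivalent to an absolutely simple node $\rho$ in $CS_m\setminus\mathcal B_i$ which belongs to $\mathcal L(\rho_k,\rho_{k+1})$. Then: (a) the nodes in $CS_m\setminus\mathcal B_i$ that are $CS_m$-path equivalent to $\mathcal B_i$ and are not absolutely appendage (including $\rho$) are absolutely simple nodes contained in $\mathcal L(\rho_k,\rho_{k+1})$, and none of them is absolutely super-simple; (b) for every $j=1,\dots,n$ there is an $\iota_jo$-simple path $S_j$ such that nodes in $\mathcal B_i$ are $CS_j$-path equivalent to $\rho$ in $CS_j\setminus\mathcal B_i$; (c) if $\tilde S_m$ is another $\iota_mo$-simple path such that nodes in $\mathcal B_i$ are $C\tilde S_m$-path equivalent to nodes in $C\tilde S_m\setminus\mathcal B_i$, then there is an absolutely simple node $\tau$ between $\rho_k$ and $\rho_{k+1}$ which is $C\tilde S_m$-path equivalent to $\mathcal B_i$.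
   Context: Node $b$ is downstream from $a$ if there is a directed path from $a$ to $b$. A core network: every node is upstream from $o$ and downstream from at least one input node. A simple path visits each node at most once; an $\iota_mo$-simple path is a simple path from $\iota_m$ to $o$. A node is $\iota_m$-simple if it lies on an $\iota_mo$-simple path, $\iota_m$-appendage if downstream from $\iota_m$ but not $\iota_m$-simple; absolutely simple (resp. absolutely appendage) if $\iota_m$-simple (resp. $\iota_m$-appendage) for every $m$. Absolutely super-simple: lies on every $\iota_mo$-simple path for every $m$; these are totally ordered $\rho_1>\cdots>\rho_p>o$ ($a>b$ iff $b$ comes after $a$ on every $\iota_mo$-simple path for every $m$); adjacent means consecutive. An absolutely simple node $\rho$ is between adjacent $\rho_k>\rho_{k+1}$ if for some $m$ some $\iota_mo$-simple path visits $\rho_k,\rho,\rho_{k+1}$ in that order; $\mathcal L(\rho_k,\rho_{k+1})$ is the subnetwork of absolutely simple nodes between them. $\mathcal A_{\mathcal G}$: all absolutely appendage nodes with arrows of $\mathcal G$ between them. For a subnetwork $\mathcal K$, nodes are $\mathcal K$-path equivalent if joined by directed paths inside $\mathcal K$ in both directions; a $\mathcal K$-path component is an equivalence class. For an $\iota_mo$-simple path $S$, $CS$ is the subnetwork of nodes of $\mathcal G$ not on $S$ with all arrows of $\mathcal G$ between them. *)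

From mathcomp Require Import all_boot.
From mathcomp Require Import boolp.
Set Implicit Arguments. Unset Strict Implicit. Unset Printing Implicit Defensive.

Section Network.
Variables (V : finType) (e : rel V) (n : nat) (iota : 'I_n -> V) (o : V).

Definition downstream (a b : V) : bool := connect e a b.

Definition io_network : Prop :=
  injective iota /\ forall m : 'I_n, iota m != o.

Definition core_network : Prop :=
  io_network /\
  forall x : V, downstream x o /\ exists m : 'I_n, downstream (iota m) x.

(* A simple path from a to b, given by its node list a :: s. *)
Definition simple_path (a b : V) (s : seq V) : bool :=
  [&& path e a s, uniq (a :: s) & last a s == b].

Definition io_simple (m : 'I_n) (s : seq V) : bool := simple_path (iota m) o s.

Definition on_path (m : 'I_n) (s : seq V) (x : V) : bool := x \in iota m :: s.

Definition m_simple (m : 'I_n) (x : V) : Prop :=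
  exists s, io_simple m s /\ on_path m s x.

Definition m_appendage (m : 'I_n) (x : V) : Prop :=
  downstream (iota m) x /\ ~ m_simple m x.

Definition abs_simple (x : V) : Prop := forall m, m_simple m x.
Definition abs_appendage (x : V) : Prop := forall m, m_appendage m x.

Definition abs_super_simple (x : V) : Prop :=
  forall m s, io_simple m s -> on_path m s x.

Definition comes_after (p : seq V) (x y : V) : bool :=
  [&& x \in p, y \in p & index x p < index y p].

Definition ss_gt (a b : V) : Prop :=
  forall m s, io_simple m s -> comes_after (iota m :: s) a b.

Definition ss_adjacent (a b : V) : Prop :=
  [/\ abs_super_simple a, abs_super_simple b, ss_gt a b &
      ~ exists c, [/\ abs_super_simple c, ss_gt a c & ss_gt c b]].

Definition between (rk rk1 rho : V) : Prop :=
  abs_simple rho /\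
  exists m s, [/\ io_simple m s, comes_after (iota m :: s) rk rho
                & comes_after (iota m :: s) rho rk1].

(* node set of the subnetwork L(rk, rk1) *)
Definition in_L (rk rk1 x : V) : Prop := between rk rk1 x.

(* subnetworks given by node predicates, with all arrows of G between them *)
Definition sub_rel (K : pred V) : rel V := [rel x y | [&& e x y, x \in K & y \in K]].

Definition pequiv (K : pred V) (x y : V) : bool :=
  [&& x \in K, y \in K, connect (sub_rel K) x y & connect (sub_rel K) y x].

Definition A_G : pred V := fun x => `[< abs_appendage x >].

Definition path_component (K : pred V) (B : {set V}) : Prop :=
  exists2 x, x \in K & B = [set y | pequiv K x y].

(* node predicate of CS, for S = iota m :: s *)
Definition CS (m : 'I_n) (s : seq V) : pred V := [pred x | x \notin iota m :: s].

Definition equiv_to_set (K : pred V) (B : {set V}) (y : V) : Prop :=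
  forall x, x \in B -> pequiv K x y.

End Network.

(** A super-simple node [r] separates every input from [o]: no path from an
    input to [o] avoids [r].  Hence a node lying before [r] on one simple
    input-output path lies before [r] on every such path through it, so two
    such paths can be spliced at [r] (the first up to [r], the second from [r]
    on) into a simple one.

    [CS_m] contains neither [rho_k] nor [rho_(k+1)], so a node strongly
    connected to [rho] inside [CS_m] reaches [rho_(k+1)] avoiding [rho_k] and is
    reached from [rho_k] avoiding [rho_(k+1)]; on any simple path through it, it
    must then lie strictly between them.  This gives (a), and also (c): as
    [B_i] is a whole [A_G]-component, a [C~S_m]-component that contains [B_i]
    and a node outside [B_i] contains a node that is not absolutely appendage.
    For (b), splice any [iota_j o]-simple path with [S_m] at [rho_k]: a node
    before [rho_k] that is strongly connected to [rho] in [CS_m] would reach [o]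
    avoiding [rho_k]. *)
From mathcomp Require Import all_boot.
From mathcomp Require Import boolp.
Set Implicit Arguments. Unset Strict Implicit. Unset Printing Implicit Defensive.

Section Splice.
Variables (T : eqType) (r : T).
Implicit Types (x : T) (s l : seq T).

Definition splice (l1 l2 : seq T) : seq T :=
  take (index r l1) l1 ++ drop (index r l2) l2.

Lemma in_drop_uniq x s i :
  uniq s -> x \in s -> (x \in drop i s) = (i <= index x s).
Proof.
move=> us xs; rewrite leqNgt -in_take //.
have : uniq (take i s ++ drop i s) by rewrite cat_take_drop.
rewrite cat_uniq => /and3P[_ /hasPn dis _].
have [xt|xt] /= := boolP (x \in take i s); first by apply/negP => /dis; rewrite xt.
by move: xs; rewrite -{1}(cat_take_drop i s) mem_cat (negbTE xt).
Qed.

Lemma mem_splice l1 l2 x : uniq l2 ->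
  (x \in splice l1 l2) =
  (x \in l1) && (index x l1 < index r l1) || (x \in l2) && (index r l2 <= index x l2).
Proof.
move=> u2; rewrite mem_cat; congr (_ || _).
  have [xl1|xl1] := boolP (x \in l1); first by rewrite in_take.
  by apply/negbTE; apply: contra xl1; apply: mem_take.
have [xl2|xl2] := boolP (x \in l2); first by rewrite in_drop_uniq.
by apply/negbTE; apply: contra xl2; apply: mem_drop.
Qed.

Lemma splice_cons l1 l2 : r \in l2 ->
  splice l1 l2 = take (index r l1) l1 ++ r :: drop (index r l2).+1 l2.
Proof. by move=> r2; rewrite /splice drop_index. Qed.

Lemma splice_head x s l2 : r \in l2 ->
  splice (x :: s) l2 = x :: behead (splice (x :: s) l2).
Proof. by move=> r2; rewrite /splice /=; case: eqP => [xr|_] //=; rewrite xr drop_index. Qed.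

Lemma last_splice x l1 l2 : r \in l2 -> last x (splice l1 l2) = last x l2.
Proof.
move=> r2; rewrite splice_cons // last_cat /=.
by rewrite -[in RHS](cat_take_drop (index r l2) l2) drop_index // last_cat.
Qed.

Lemma sorted_splice (e : rel T) l1 l2 : r \in l1 -> r \in l2 ->
  sorted e l1 -> sorted e l2 -> sorted e (splice l1 l2).
Proof.
move=> r1 r2; rewrite splice_cons // sorted_cat_cons.
rewrite -[in sorted e l1](cat_take_drop (index r l1) l1) drop_index //.
rewrite -[in sorted e l2](cat_take_drop (index r l2) l2) drop_index //.
by rewrite !sorted_cat_cons => /andP[-> _] /andP[_ ->].
Qed.

Lemma uniq_splice l1 l2 : uniq l1 -> uniq l2 ->
  (forall x, x \in l1 -> x \in l2 -> index x l1 < index r l1 -> index x l2 < index r l2) ->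
  uniq (splice l1 l2).
Proof.
move=> u1 u2 before; rewrite cat_uniq take_uniq ?drop_uniq //= andbT.
apply/hasPn => x xd; apply/negP => xt.
have xl1 := mem_take xt; have xl2 := mem_drop xd.
move: xt xd; rewrite in_take // in_drop_uniq // => xr1.
by rewrite leqNgt (before x xl1 xl2 xr1).
Qed.

End Splice.

Section SubRelation.
Variables (V : finType) (e : rel V).

Lemma connect_sub_rel_sub (K K' : pred V) a b : {subset K <= K'} ->
  connect (sub_rel e K) a b -> connect (sub_rel e K') a b.
Proof.
move=> sKK'; apply: connect_sub => x y /and3P[exy xK yK].
by apply: connect1; rewrite /sub_rel /= exy !sKK'.
Qed.

Lemma connect_sub_relW (K : pred V) a b : connect (sub_rel e K) a b -> connect e a b.
Proof. by apply: connect_sub => x y /and3P[exy _ _]; apply: connect1. Qed.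

Lemma path_sub_rel_mem (K : pred V) x p : path (sub_rel e K) x p -> {subset p <= K}.
Proof.
elim: p x => [|y p IHp] x //= /andP[/and3P[_ _ yK] yp] z.
by rewrite inE => /predU1P[-> // | /(IHp _ yp)].
Qed.

Lemma connect_simple_path (r : rel V) a b : connect r a b -> exists s, simple_path r a b s.
Proof.
case/connectP=> p ap ->; have [s ps us _] := shortenP ap.
by exists s; rewrite /simple_path ps us eqxx.
Qed.

Lemma connect_sub_rel_restrict (K K' : pred V) a b : connect (sub_rel e K) a b ->
  (forall z, z \in K -> connect (sub_rel e K) a z -> connect (sub_rel e K) z b -> z \in K') ->
  connect (sub_rel e K') a b.
Proof.
case/connectP=> p ap ->{b}; elim: p a ap => [|y p IHp] a //= /andP[ay yp] inK'.
have /and3P[eay aK yK] := ay.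
have yb : connect (sub_rel e K) y (last y p) by apply/connectP; exists p.
have ab := connect_trans (connect1 ay) yb.
apply: (@connect_trans _ _ y).
  apply: connect1; rewrite /sub_rel /= eay.
  by rewrite (inK' a aK (connect0 _ _) ab) (inK' y yK (connect1 ay) yb).
by apply: IHp => // z zK yz zb; apply: inK' zb => //; apply: connect_trans (connect1 ay) yz.
Qed.

Lemma pequiv_sym (K : pred V) x y : pequiv e K x y -> pequiv e K y x.
Proof. by case/and4P=> xK yK xy yx; rewrite /pequiv xK yK xy yx. Qed.

Lemma pequiv_trans (K : pred V) x y z :
  pequiv e K x y -> pequiv e K y z -> pequiv e K x z.
Proof.
case/and4P=> xK _ xy yx /and4P[_ zK yz zy].
by rewrite /pequiv xK zK (connect_trans xy yz) (connect_trans zy yx).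
Qed.

Lemma pequiv_restrict (K K' : pred V) x y : pequiv e K x y ->
  (forall z, pequiv e K x z -> z \in K') -> pequiv e K' x y.
Proof.
move=> pxy inK'; case/and4P: (pxy) => xK yK xy yx.
rewrite /pequiv (inK' y pxy) (inK' x) /=; last by rewrite /pequiv xK !connect0.
apply/andP; split.
  apply: (connect_sub_rel_restrict xy) => z zK xz zy.
  by apply: inK'; rewrite /pequiv xK zK xz (connect_trans zy yx).
apply: (connect_sub_rel_restrict yx) => z zK yz zx.
by apply: inK'; rewrite /pequiv xK zK zx (connect_trans xy yz).
Qed.

Lemma pequiv_exit (K A : pred V) x y : pequiv e K x y -> ~~ pequiv e A x y ->
  exists2 u, pequiv e K x u & u \notin A.
Proof.
move=> pxy /negP nA; apply: contrapT => noexit; apply: nA.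
apply: (pequiv_restrict pxy) => z pz; apply: contrapT => /negP zA.
by apply: noexit; exists z.
Qed.

Lemma connect_sub_rel_nth (K : pred V) x p i j : path e x p -> i <= j < size (x :: p) ->
  (forall k, i <= k <= j -> nth x (x :: p) k \in K) ->
  connect (sub_rel e K) (nth x (x :: p) i) (nth x (x :: p) j).
Proof.
move=> xp; elim: j => [|j IHj] /andP[ij jp] inK.
  by rewrite leqn0 in ij; rewrite (eqP ij) connect0.
case: (ltngtP i j.+1) ij => [ij|//|->] _; last exact: connect0.
have {}ij : i <= j := ij.
apply: connect_trans (IHj _ _) (connect1 _); first by rewrite ij ltnW.
  by move=> k /andP[ik kj]; apply: inK; rewrite ik ltnW.
apply/and3P; split; first exact: (pathP x xp).
  by apply: inK; rewrite ij leqW.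
by apply: inK; rewrite (leqW ij) leqnn.
Qed.

Lemma connect_avoid_along x p r a b : path e x p -> uniq (x :: p) ->
  a \in x :: p -> b \in x :: p -> index a (x :: p) <= index b (x :: p) ->
  (index r (x :: p) < index a (x :: p)) || (index b (x :: p) < index r (x :: p)) ->
  connect (sub_rel e (predC1 r)) a b.
Proof.
move=> xp uxp ap bp ab rab; rewrite -(nth_index x ap) -(nth_index x bp).
apply: connect_sub_rel_nth => //; first by rewrite ab index_mem.
move=> k /andP[ak kb]; rewrite inE; apply: contraTneq rab => kr.
have kp : k < size (x :: p) by rewrite (leq_ltn_trans kb) ?index_mem.
by rewrite -kr index_uniq // negb_or -!leqNgt ak kb.
Qed.

End SubRelation.

Section Network.
Variables (V : finType) (e : rel V) (n : nat) (iota : 'I_n -> V) (o : V).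
Hypothesis input_ne_output : forall j, iota j != o.
Hypothesis input_reaches_output : forall j, downstream e (iota j) o.

Local Notation io_simple := (io_simple e iota o).
Local Notation m_simple := (m_simple e iota o).
Local Notation abs_simple := (abs_simple e iota o).
Local Notation abs_appendage := (abs_appendage e iota o).
Local Notation abs_super_simple := (abs_super_simple e iota o).
Local Notation ss_gt := (ss_gt e iota o).
Local Notation between := (between e iota o).
Local Notation CS := (CS iota).
Local Notation A_G := (A_G e iota o).

Lemma exists_io_simple j : exists s, io_simple j s.
Proof. exact: connect_simple_path (input_reaches_output j). Qed.

Lemma connect_io_prefix r j s z : io_simple j s -> z \in iota j :: s ->
  index z (iota j :: s) < index r (iota j :: s) ->
  connect (sub_rel e (predC1 r)) (iota j) z.
Proof.
case/and3P=> ps us _ zl zr.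
by apply: (connect_avoid_along ps us) => //=; rewrite ?mem_head ?eqxx ?zr ?orbT.
Qed.

Lemma connect_io_suffix r j s z : io_simple j s -> z \in iota j :: s ->
  index r (iota j :: s) < index z (iota j :: s) ->
  connect (sub_rel e (predC1 r)) z o.
Proof.
case/and3P=> ps us /eqP <- zl rz.
apply: (connect_avoid_along ps us) => //; rewrite ?mem_last ?rz //.
by rewrite index_last // -ltnS index_mem.
Qed.

Lemma super_simple_separates r j :
  abs_super_simple r -> ~ connect (sub_rel e (predC1 r)) (iota j) o.
Proof.
move=> ssr /connect_simple_path[s /and3P[ps us lo]].
have hs : io_simple j s.
  by rewrite /io_simple /simple_path us lo (sub_path _ ps) // => x y /and3P[].
move: (ssr j s hs); rewrite /on_path inE => /predU1P[rj | /(path_sub_rel_mem ps)].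
  case: s ps lo {us hs} => [_ /eqP /= jo | y s /= /andP[/and3P[_ + _] _]].
    by move: (input_ne_output j); rewrite jo eqxx.
  by rewrite inE rj eqxx.
by rewrite inE eqxx.
Qed.

Lemma before_super_simple_no_bypass r j s z :
  abs_super_simple r -> io_simple j s -> z \in iota j :: s ->
  index z (iota j :: s) < index r (iota j :: s) ->
  ~ connect (sub_rel e (predC1 r)) z o.
Proof.
move=> ssr hs zl zr zo; apply: (super_simple_separates (j := j) ssr).
exact: connect_trans (connect_io_prefix hs zl zr) zo.
Qed.

Lemma after_super_simple_no_bypass r j s z :
  abs_super_simple r -> io_simple j s -> z \in iota j :: s ->
  index r (iota j :: s) < index z (iota j :: s) ->
  ~ connect (sub_rel e (predC1 r)) (iota j) z.
Proof.
move=> ssr hs zl rz jz; apply: (super_simple_separates (j := j) ssr).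
exact: connect_trans jz (connect_io_suffix hs zl rz).
Qed.

Lemma before_super_simple_stable r j1 s1 j2 s2 z :
  abs_super_simple r -> io_simple j1 s1 -> io_simple j2 s2 ->
  z \in iota j1 :: s1 -> z \in iota j2 :: s2 ->
  index z (iota j1 :: s1) < index r (iota j1 :: s1) ->
  index z (iota j2 :: s2) < index r (iota j2 :: s2).
Proof.
move=> ssr h1 h2 zl1 zl2 zr1; rewrite ltnNge leq_eqVlt; apply/negP => /orP[/eqP rz | rz].
  have r2 := ssr j2 s2 h2.
  by move: zr1; rewrite -(index_inj r r2 zl2 rz) ltnn.
exact: (before_super_simple_no_bypass ssr h1 zl1 zr1 (connect_io_suffix h2 zl2 rz)).
Qed.

Lemma splice_io_simple r j1 s1 j2 s2 :
  abs_super_simple r -> io_simple j1 s1 -> io_simple j2 s2 ->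
  exists2 s, io_simple j1 s & iota j1 :: s =i splice r (iota j1 :: s1) (iota j2 :: s2).
Proof.
move=> ssr h1 h2; have r1 := ssr j1 s1 h1; have r2 := ssr j2 s2 h2.
have /and3P[p1 u1 _] := h1; have /and3P[p2 u2 /eqP l2o] := h2.
have eR := splice_head (iota j1) s1 r2.
exists (behead (splice r (iota j1 :: s1) (iota j2 :: s2))); last by rewrite -eR.
apply/and3P; split; rewrite -?eR.
- by have := sorted_splice r1 r2 p1 p2; rewrite {1}eR.
- apply: (uniq_splice u1 u2) => z zl1 zl2.
  exact: before_super_simple_stable ssr h1 h2 zl1 zl2.
- by have := last_splice (iota j1) (iota j1 :: s1) r2; rewrite {1}eR /= l2o => ->.
Qed.

Lemma abs_simple_after_super_simple r j s u :
  abs_super_simple r -> io_simple j s -> u \in iota j :: s ->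
  index r (iota j :: s) <= index u (iota j :: s) -> abs_simple u.
Proof.
move=> ssr hs ul ru j1; have [s1 h1] := exists_io_simple j1.
have [s' hs' mem_s'] := splice_io_simple ssr h1 hs.
have /and3P[_ us _] := hs.
by exists s'; split; rewrite // /on_path mem_s' mem_splice // ul ru orbT.
Qed.

Lemma between_of_bypasses rk rk1 j s u :
  abs_super_simple rk -> abs_super_simple rk1 -> ss_gt rk rk1 ->
  io_simple j s -> u \in iota j :: s -> u != rk -> u != rk1 ->
  connect (sub_rel e (predC1 rk)) u rk1 -> connect (sub_rel e (predC1 rk1)) rk u ->
  between rk rk1 u.
Proof.
move=> ssk ssk1 gt_k_k1 hs ul uk uk1 u_k1 k_u.
have kl : rk \in iota j :: s := ssk j s hs.
have k1l : rk1 \in iota j :: s := ssk1 j s hs.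
have /and3P[_ _ k_k1] := gt_k_k1 j s hs.
have k_lt_u : index rk (iota j :: s) < index u (iota j :: s).
  rewrite ltn_neqAle leqNgt; apply/andP; split.
    by apply: contra uk => /eqP ku; rewrite (index_inj u kl ul ku).
  apply/negP => u_lt_k; apply: (before_super_simple_no_bypass ssk hs ul u_lt_k).
  exact: connect_trans u_k1 (connect_io_suffix hs k1l k_k1).
have u_lt_k1 : index u (iota j :: s) < index rk1 (iota j :: s).
  rewrite ltn_neqAle leqNgt; apply/andP; split.
    by apply: contra uk1 => /eqP uk1; rewrite (index_inj u ul k1l uk1).
  apply/negP => k1_lt_u; apply: (after_super_simple_no_bypass ssk1 hs ul k1_lt_u).
  exact: connect_trans (connect_io_prefix hs kl k_k1) k_u.
split; last by exists j, s; rewrite /comes_after kl ul k1l k_lt_u u_lt_k1.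
exact: abs_simple_after_super_simple ssk hs ul (ltnW k_lt_u).
Qed.

Lemma between_bypasses rk rk1 u : between rk rk1 u ->
  connect (sub_rel e (predC1 rk1)) rk u /\ connect (sub_rel e (predC1 rk)) u rk1.
Proof.
case=> _ [j [s [/and3P[ps us _] /and3P[kl ul k_u] /and3P[_ k1l u_k1]]]].
split; apply: (connect_avoid_along ps us) => //.
- by rewrite ltnW.
- by rewrite u_k1 orbT.
- by rewrite ltnW.
- by rewrite k_u.
Qed.

Lemma downstream_abs_simple j x : abs_simple x -> downstream e (iota j) x.
Proof. by case/(_ j) => s [/and3P[ps _ _] xl]; apply: path_connect ps _ xl. Qed.

Lemma m_simple_of_not_abs_appendage x : (forall j, downstream e (iota j) x) ->
  ~ abs_appendage x -> exists j, m_simple j x.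
Proof.
move=> dx /existsNP[j nj]; exists j.
by apply: contra_notP nj => nxs; split.
Qed.

Lemma CS_sub_predC1 r j s : abs_super_simple r -> io_simple j s ->
  {subset CS j s <= predC1 r}.
Proof. by move=> ssr hs z; rewrite !inE; apply: contraNneq => ->; apply: ssr. Qed.

Lemma between_of_connect_between rk rk1 rho u :
  abs_super_simple rk -> abs_super_simple rk1 -> ss_gt rk rk1 -> between rk rk1 rho ->
  u != rk -> u != rk1 ->
  connect (sub_rel e (predC1 rk)) u rho -> connect (sub_rel e (predC1 rk1)) rho u ->
  ~ abs_appendage u -> between rk rk1 u.
Proof.
move=> ssk ssk1 gt_k_k1 rho_b uk uk1 u_rho rho_u nA.
have [k_rho rho_k1] := between_bypasses rho_b.
have [j [s [hs ul]]] : exists j, m_simple j u.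
  apply: m_simple_of_not_abs_appendage nA => j.
  exact: connect_trans (downstream_abs_simple j rho_b.1) (connect_sub_relW rho_u).
apply: (between_of_bypasses ssk ssk1 gt_k_k1 hs ul uk uk1).
  exact: connect_trans u_rho rho_k1.
exact: connect_trans k_rho rho_u.
Qed.

Section AppendageComponent.
Variables (rk rk1 rho x0 : V) (B : {set V}) (m : 'I_n) (Sm : seq V).
Hypotheses (ssk : abs_super_simple rk) (ssk1 : abs_super_simple rk1) (gt_k_k1 : ss_gt rk rk1).
Hypotheses (x0_A : x0 \in A_G) (B_def : B = [set y | pequiv e A_G x0 y]).
Hypotheses (hSm : io_simple m Sm) (rho_b : between rk rk1 rho).
Hypothesis rho_equiv : equiv_to_set e (CS m Sm) B rho.

Lemma x0_in_B : x0 \in B.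
Proof. by rewrite B_def inE /pequiv x0_A connect0. Qed.

Lemma CS_equiv_between y : y \in CS m Sm -> equiv_to_set e (CS m Sm) B y ->
  ~ abs_appendage y -> between rk rk1 y.
Proof.
move=> yC y_eq nA.
have /and4P[_ _ y_rho rho_y] : pequiv e (CS m Sm) y rho.
  exact: pequiv_trans (pequiv_sym (y_eq x0 x0_in_B)) (rho_equiv x0_in_B).
have CSk := CS_sub_predC1 ssk hSm; have CSk1 := CS_sub_predC1 ssk1 hSm.
apply: (between_of_connect_between ssk ssk1 gt_k_k1 rho_b) => //.
- exact: CSk y yC.
- exact: CSk1 y yC.
- exact: connect_sub_rel_sub CSk y_rho.
- exact: connect_sub_rel_sub CSk1 rho_y.
Qed.

Lemma CS_splice_equiv j : exists Sj,
  [/\ io_simple j Sj, rho \in CS j Sj & equiv_to_set e (CS j Sj) B rho].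
Proof.
have [s hs] := exists_io_simple j.
have [Sj hSj mem_Sj] := splice_io_simple ssk hs hSm.
have /and3P[_ uSm _] := hSm.
have rho_k1 := (between_bypasses rho_b).2.
have /and3P[_ _ k_k1] := gt_k_k1 hSm.
have CS_Sj z : z \in CS m Sm -> connect (sub_rel e (CS m Sm)) z rho -> z \in CS j Sj.
  move=> zC z_rho; rewrite [_ \in CS j Sj]inE mem_Sj mem_splice // (negbTE zC) /= orbF.
  apply/negP => /andP[zl z_lt_k].
  apply: (before_super_simple_no_bypass ssk hs zl z_lt_k).
  apply: connect_trans (connect_sub_rel_sub (CS_sub_predC1 ssk hSm) z_rho) _.
  exact: connect_trans rho_k1 (connect_io_suffix hSm (ssk1 hSm) k_k1).
have /and4P[_ rhoC _ _] := rho_equiv x0_in_B.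
exists Sj; split => // [|x xB]; first exact: CS_Sj rho rhoC (connect0 _ _).
have /and4P[_ _ x_rho _] := rho_equiv xB.
apply: (pequiv_restrict (rho_equiv xB)) => z /and4P[_ zC _ z_x].
exact: CS_Sj zC (connect_trans z_x x_rho).
Qed.

Lemma CS_component_exit_between j St y : io_simple j St -> y \notin B ->
  equiv_to_set e (CS j St) B y ->
  exists tau, [/\ abs_simple tau, between rk rk1 tau & equiv_to_set e (CS j St) B tau].
Proof.
move=> hSt yB y_eq; have x0y := y_eq x0 x0_in_B.
have x0_y_out : ~~ pequiv e A_G x0 y by move: yB; rewrite B_def inE.
have [u x0u uA] := pequiv_exit x0y x0_y_out.
have /and4P[_ uC x0_u u_x0] := x0u.
have /and4P[_ _ x0_rho rho_x0] := rho_equiv x0_in_B.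
have ub : between rk rk1 u.
  apply: (between_of_connect_between ssk ssk1 gt_k_k1 rho_b).
  - exact: CS_sub_predC1 ssk hSt u uC.
  - exact: CS_sub_predC1 ssk1 hSt u uC.
  - apply: connect_trans (connect_sub_rel_sub (CS_sub_predC1 ssk hSt) u_x0) _.
    exact: connect_sub_rel_sub (CS_sub_predC1 ssk hSm) x0_rho.
  - apply: connect_trans (connect_sub_rel_sub (CS_sub_predC1 ssk1 hSm) rho_x0) _.
    exact: connect_sub_rel_sub (CS_sub_predC1 ssk1 hSt) x0_u.
  - by move=> uapp; move/negP: uA; apply; apply/asboolP.
exists u; split => // [|x xB]; first exact: ub.1.
exact: pequiv_trans (y_eq x xB) (pequiv_trans (pequiv_sym x0y) x0u).
Qed.

End AppendageComponent.

End Network.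

Theorem lemma3p22 (V : finType) (e : rel V) (n : nat) (iota : 'I_n -> V) (o : V)
  (rk rk1 rho : V) (B : {set V}) (m : 'I_n) (Sm : seq V) :
  core_network e iota o ->
  ss_adjacent e iota o rk rk1 ->
  path_component e (A_G e iota o) B ->
  io_simple e iota o m Sm ->
  rho \in CS iota m Sm -> rho \notin B ->
  abs_simple e iota o rho ->
  in_L e iota o rk rk1 rho ->
  equiv_to_set e (CS iota m Sm) B rho ->
  (* (a) *)
  (forall y : V, y \in CS iota m Sm -> y \notin B ->
     equiv_to_set e (CS iota m Sm) B y ->
     ~ abs_appendage e iota o y ->
     [/\ abs_simple e iota o y, in_L e iota o rk rk1 y &
         ~ abs_super_simple e iota o y])
  /\
  (* (b) *)
  (forall j : 'I_n, exists Sj : seq V,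
     [/\ io_simple e iota o j Sj, rho \in CS iota j Sj &
         equiv_to_set e (CS iota j Sj) B rho])
  /\
  (* (c) *)
  (forall St : seq V, io_simple e iota o m St ->
     (exists y : V, [/\ y \in CS iota m St, y \notin B &
                       equiv_to_set e (CS iota m St) B y]) ->
     exists tau : V, [/\ abs_simple e iota o tau, between e iota o rk rk1 tau &
                         equiv_to_set e (CS iota m St) B tau]).
Proof.
move=> [[_ ne] reach] [ssk ssk1 gt_k_k1 _] [x0 x0_A B_def] hSm _ _ _ rho_b rho_equiv.
have reach_o j : downstream e (iota j) o := proj1 (reach (iota j)).
split; [|split].
- move=> y yC _ y_eq nA.
  have yb := CS_equiv_between ne reach_o ssk ssk1 gt_k_k1 x0_A B_def hSm rho_b rho_equiv
               yC y_eq nA.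
  by split; [exact: yb.1 | exact: yb | move/(_ m Sm hSm); apply/negP].
- exact: (CS_splice_equiv ne reach_o ssk ssk1 gt_k_k1 x0_A B_def hSm rho_b rho_equiv).
- move=> St hSt [y [_ yB y_eq]].
  exact: (CS_component_exit_between ne reach_o ssk ssk1 gt_k_k1 x0_A B_def hSm rho_b
           rho_equiv hSt yB y_eq).
Qed.
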